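(* Let $\mathcal{X}_1,\mathcal{X}_2$ be non-empty sets, $\mathcal{B}_i\subseteq\mathcal{P}(\mathcal{X}_i)\setminus\{\emptyset\}$ and $\mathcal{D}_i$ a coherent set of desirable gambles on $\mathcal{X}_i$ for $i\in\{1,2\}$. Then $\mathcal{D}_1\otimes\mathcal{D}_2$ is an independent product of $\mathcal{D}_1$ and $\mathcal{D}_2$.
   Context: Gambles on a non-empty set $\mathcal{X}$ are bounded real functions; $\mathcal{G}(\mathcal{X})$ is the set of gambles, $\mathcal{G}_{>0}(\mathcal{X})$ the non-negative non-zero gambles, $\mathbb{I}_A$ the indicator of $A$. For $\mathcal{A}\subseteq\mathcal{G}(\mathcal{X})$: $\mathrm{posi}(\mathcal{A}):=\{\sum_{i=1}^n\lambda_if_i\colon n\in\mathbb{N},\lambda_i>0,f_i\in\mathcal{A}\}$, $\mathcal{E}(\mathcal{A}):=\mathrm{posi}(\mathcal{A}\cup\mathcal{G}_{>0}(\mathcal{X}))$. A coherent set of desirable gambles $\mathcal{D}\subseteq\mathcal{G}(\mathcal{X})$ satisfies, for all $f,g\in\mathcal{G}(\mathcal{X})$ and $\lambda>0$: (D1) $f\geq0,f\neq0\Rightarrow f\in\mathcal{D}$; (D2) $f\in\mathcal{D}\Rightarrow\lambda f\in\mathcal{D}$; (D3) $f,g\in\mathcal{D}\Rightarrow f+g\in\mathcal{D}$; (D4) $f\leq0\Rightarrow f\notin\mathcal{D}$. Gambles on $\mathcal{X}_i$ are identified with their cylindrical extensions to $\mathcal{X}_1\times\mathcal{X}_2$, events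 $B\subseteq\mathcal{X}_1$ with $B\times\mathcal{X}_2$ (similarly for $\mathcal{X}_2$). $\mathcal{D}_1\otimes\mathcal{D}_2:=\mathcal{E}(\mathcal{A}_{1\to2}\cup\mathcal{A}_{2\to1})$, where $\mathcal{A}_{1\to2}:=\{f_2(X_2)\mathbb{I}_{B_1}(X_1)\colon f_2\in\mathcal{D}_2,B_1\in\mathcal{B}_1\cup\{\mathcal{X}_1\}\}$ and $\mathcal{A}_{2\to1}:=\{f_1(X_1)\mathbb{I}_{B_2}(X_2)\colon f_1\in\mathcal{D}_1,B_2\in\mathcal{B}_2\cup\{\mathcal{X}_2\}\}$. For $\mathcal{D}$ on $\mathcal{X}_1\times\mathcal{X}_2$ and $\{i,j\}=\{1,2\}$: $\mathrm{marg}_i(\mathcal{D}):=\{f\in\mathcal{G}(\mathcal{X}_i)\colon f(X_i)\in\mathcal{D}\}$, $\mathrm{marg}_i(\mathcal{D}\rfloor B_j):=\{f\in\mathcal{G}(\mathcal{X}_i)\colon f(X_i)\mathbb{I}_{B_j}(X_j)\in\mathcal{D}\}$. A coherent $\mathcal{D}$ on $\mathcal{X}_1\times\mathcal{X}_2$ is epistemically independent if $\mathrm{marg}_i(\mathcal{D}\rfloor B_j)=\mathrm{marg}_i(\mathcal{D})$ for all $\{i,j\}=\{1,2\}$ and $B_j\in\mathcal{B}_j$. An independent product of $\mathcal{D}_1,\mathcal{D}_2$ is an epistemically independent coherent set of desirable gambles $\mathcal{D}$ on $\mathcal{X}_1\times\mathcal{X}_2$ with $\mathrm{marg}_1(\mathcal{D})=\mathcal{D}_1$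 and $\mathrm{marg}_2(\mathcal{D})=\mathcal{D}_2$. *)

From Stdlib Require Import Reals List ClassicalEpsilon.
Open Scope R_scope.
Set Implicit Arguments.

Definition gset (X : Type) := (X -> R) -> Prop.

Definition bounded {X : Type} (f : X -> R) : Prop :=
  exists M : R, forall x, Rabs (f x) <= M.

Definition Gpos {X : Type} : gset X := fun f =>
  bounded f /\ (forall x, 0 <= f x) /\ (exists x, f x <> 0).

Definition posi {X : Type} (A : gset X) : gset X := fun f =>
  exists l : list (R * (X -> R)),
    l <> nil /\
    Forall (fun p => 0 < fst p /\ A (snd p)) l /\
    f = (fun x => fold_right (fun p acc => fst p * snd p x + acc) 0 l).

Definition gunion {X : Type} (A B : gset X) : gset X := fun f => A f \/ B f.

Definition natext {X : Type} (A : gset X) : gset X := posi (gunion A Gpos).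

Definition coherent {X : Type} (D : gset X) : Prop :=
  (forall f, D f -> bounded f) /\
  (forall f, bounded f -> (forall x, 0 <= f x) -> (exists x, f x <> 0) -> D f) /\
  (forall f (lam : R), D f -> 0 < lam -> D (fun x => lam * f x)) /\
  (forall f g, D f -> D g -> D (fun x => f x + g x)) /\
  (forall f, bounded f -> (forall x, f x <= 0) -> ~ D f).

Definition ind {X : Type} (B : X -> Prop) (x : X) : R :=
  if excluded_middle_informative (B x) then 1 else 0.

Definition A12 {X1 X2 : Type} (Bs1 : (X1 -> Prop) -> Prop) (D2 : gset X2)
  : gset (X1 * X2) := fun h =>
  exists (f2 : X2 -> R) (B1 : X1 -> Prop),
    D2 f2 /\ (Bs1 B1 \/ B1 = (fun _ => True)) /\
    h = (fun z => f2 (snd z) * ind B1 (fst z)).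

Definition A21 {X1 X2 : Type} (Bs2 : (X2 -> Prop) -> Prop) (D1 : gset X1)
  : gset (X1 * X2) := fun h =>
  exists (f1 : X1 -> R) (B2 : X2 -> Prop),
    D1 f1 /\ (Bs2 B2 \/ B2 = (fun _ => True)) /\
    h = (fun z => f1 (fst z) * ind B2 (snd z)).

Definition indep_natext {X1 X2 : Type}
  (Bs1 : (X1 -> Prop) -> Prop) (Bs2 : (X2 -> Prop) -> Prop)
  (D1 : gset X1) (D2 : gset X2) : gset (X1 * X2) :=
  natext (gunion (A12 Bs1 D2) (A21 Bs2 D1)).

Definition marg1 {X1 X2 : Type} (D : gset (X1 * X2)) : gset X1 :=
  fun f => bounded f /\ D (fun z => f (fst z)).
Definition marg2 {X1 X2 : Type} (D : gset (X1 * X2)) : gset X2 :=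
  fun f => bounded f /\ D (fun z => f (snd z)).
Definition marg1_cond {X1 X2 : Type} (D : gset (X1 * X2)) (B2 : X2 -> Prop)
  : gset X1 := fun f => bounded f /\ D (fun z => f (fst z) * ind B2 (snd z)).
Definition marg2_cond {X1 X2 : Type} (D : gset (X1 * X2)) (B1 : X1 -> Prop)
  : gset X2 := fun f => bounded f /\ D (fun z => f (snd z) * ind B1 (fst z)).

Definition gset_eq {X : Type} (A B : gset X) : Prop := forall f, A f <-> B f.

Definition epist_indep {X1 X2 : Type}
  (Bs1 : (X1 -> Prop) -> Prop) (Bs2 : (X2 -> Prop) -> Prop)
  (D : gset (X1 * X2)) : Prop :=
  coherent D /\
  (forall B2, Bs2 B2 -> gset_eq (marg1_cond D B2) (marg1 D)) /\
  (forall B1, Bs1 B1 -> gset_eq (marg2_cond D B1) (marg2 D)).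

Definition indep_product {X1 X2 : Type}
  (Bs1 : (X1 -> Prop) -> Prop) (Bs2 : (X2 -> Prop) -> Prop)
  (D1 : gset X1) (D2 : gset X2) (D : gset (X1 * X2)) : Prop :=
  epist_indep Bs1 Bs2 D /\ gset_eq (marg1 D) D1 /\ gset_eq (marg2 D) D2.

(* Every gamble of D1 ⊗ D2 is a positive combination of generators f2(X2) I_B1(X1),
   f1(X1) I_B2(X2) and nonnegative gambles.  Integrating a generator over X2 against a
   finitely supported positive measure mu yields a gamble of D1, provided mu gives
   positive mass to one gamble of D2 attached to the generator.  Gordan's alternative,
   applied to the coherent D2, supplies a single mu doing this for finitely many
   generators at once, so integration maps D1 ⊗ D2 into D1.  Hence D1 ⊗ D2 contains no
   nonpositive gamble, and f(X1) I_B2(X2) ∈ D1 ⊗ D2 forces f ∈ D1, which gives the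
   (conditional) marginals on X1; those on X2 follow by symmetry. *)

From Stdlib Require Import Reals Lra List Classical ClassicalEpsilon FunctionalExtensionality.
Open Scope R_scope.

Definition wsum {A : Type} (l : list (R * A)) (phi : A -> R) : R :=
  fold_right (fun q acc => fst q * phi (snd q) + acc) 0 l.

Definition pos_weights {A : Type} (l : list (R * A)) : Prop := Forall (fun q => 0 < fst q) l.

Lemma wsum_nil {A} (phi : A -> R) : wsum nil phi = 0.
Proof. reflexivity. Qed.

Lemma wsum_cons {A} (q : R * A) l phi : wsum (q :: l) phi = fst q * phi (snd q) + wsum l phi.
Proof. reflexivity. Qed.

Lemma wsum_app {A} (l m : list (R * A)) phi : wsum (l ++ m) phi = wsum l phi + wsum m phi.
Proof. induction l as [|q l IH]; cbn [app]; rewrite ?wsum_nil, ?wsum_cons, ?IH; ring. Qed.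

Lemma wsum_ext {A} (l : list (R * A)) phi psi :
  (forall a, phi a = psi a) -> wsum l phi = wsum l psi.
Proof. intros E; induction l as [|q l IH]; rewrite ?wsum_cons, ?E, ?IH; reflexivity. Qed.

Lemma wsum_zero {A} (l : list (R * A)) : wsum l (fun _ => 0) = 0.
Proof. induction l as [|q l IH]; rewrite ?wsum_nil, ?wsum_cons, ?IH; ring. Qed.

Lemma wsum_linear {A} (l : list (R * A)) c phi psi :
  wsum l (fun a => c * phi a + psi a) = c * wsum l phi + wsum l psi.
Proof. induction l as [|q l IH]; rewrite ?wsum_nil, ?wsum_cons, ?IH; ring. Qed.

Lemma wsum_scalel {A} (l : list (R * A)) c phi : wsum l (fun a => c * phi a) = c * wsum l phi.
Proof. induction l as [|q l IH]; rewrite ?wsum_nil, ?wsum_cons, ?IH; ring. Qed.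

Lemma wsum_scaler {A} (l : list (R * A)) c phi : wsum l (fun a => phi a * c) = wsum l phi * c.
Proof. induction l as [|q l IH]; rewrite ?wsum_nil, ?wsum_cons, ?IH; ring. Qed.

Lemma wsum_scale_weights {A} (l : list (R * A)) c phi :
  wsum (map (fun q => (c * fst q, snd q)) l) phi = c * wsum l phi.
Proof. induction l as [|q l IH]; cbn [map]; rewrite ?wsum_nil, ?wsum_cons, ?IH; cbn; ring. Qed.

Lemma wsum_map_snd {A B} (F : A -> B) (l : list (R * A)) phi :
  wsum (map (fun q => (fst q, F (snd q))) l) phi = wsum l (fun a => phi (F a)).
Proof. induction l as [|q l IH]; cbn [map]; rewrite ?wsum_nil, ?wsum_cons, ?IH; reflexivity. Qed.

Lemma wsum_swap {A B} (l : list (R * A)) (m : list (R * B)) (phi : A -> B -> R) :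
  wsum l (fun a => wsum m (phi a)) = wsum m (fun b => wsum l (fun a => phi a b)).
Proof.
  induction l as [|q l IH].
  - rewrite wsum_nil. symmetry. apply wsum_zero.
  - rewrite wsum_cons, IH. symmetry. apply wsum_linear.
Qed.

Lemma wsum_ge0 {A} (l : list (R * A)) phi :
  pos_weights l -> (forall a, 0 <= phi a) -> 0 <= wsum l phi.
Proof.
  intros Hl Hphi; induction Hl as [|q l Hq Hl IH]; rewrite ?wsum_nil, ?wsum_cons; [lra|].
  specialize (Hphi (snd q)). nra.
Qed.

Lemma wsum_le0 {A} (l : list (R * A)) phi :
  pos_weights l -> (forall a, phi a <= 0) -> wsum l phi <= 0.
Proof.
  intros Hl Hphi; induction Hl as [|q l Hq Hl IH]; rewrite ?wsum_nil, ?wsum_cons; [lra|].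
  specialize (Hphi (snd q)). nra.
Qed.

Lemma bounded_wsum {A X} (l : list (R * A)) (phi : A -> X -> R) :
  Forall (fun q => bounded (phi (snd q))) l -> bounded (fun x => wsum l (fun a => phi a x)).
Proof.
  intros Hl; induction Hl as [|q l [M HM] Hl [M' HM']].
  - exists 0. intros x. rewrite wsum_nil, Rabs_R0. lra.
  - exists (Rabs (fst q) * M + M'). intros x. rewrite wsum_cons.
    eapply Rle_trans; [apply Rabs_triang|]. rewrite Rabs_mult.
    specialize (HM x). specialize (HM' x).
    pose proof (Rabs_pos (fst q)). nra.
Qed.

Definition avoids_nonpositivity {X : Type} (fs : list (X -> R)) : Prop :=
  forall l : list (R * (X -> R)), l <> nil ->
    Forall (fun p => 0 < fst p /\ In (snd p) fs) l -> exists x, 0 < wsum l (fun g => g x).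

Lemma avoids_nonpositivity_head {X} {f : X -> R} {fs} :
  avoids_nonpositivity (f :: fs) -> exists x, 0 < f x.
Proof.
  intros Hav. destruct (Hav ((1, f) :: nil)) as [x Hx]; [discriminate | |].
  - constructor; [cbn; split; [lra | left; reflexivity] | constructor].
  - exists x. rewrite wsum_cons, wsum_nil in Hx. cbn in Hx. lra.
Qed.

Lemma Forall_in_map_inv {A B C : Type} (P : A -> Prop) (F : B -> C) (xs : list B)
  (l' : list (A * C)) :
  Forall (fun p => P (fst p) /\ In (snd p) (map F xs)) l' ->
  exists l, Forall (fun p => P (fst p) /\ In (snd p) xs) l /\
    l' = map (fun p => (fst p, F (snd p))) l.
Proof.
  intros Hl'; induction Hl' as [|[a c] l' [Ha Hc] _ [l [Hl ->]]].
  - exists nil. split; [constructor | reflexivity].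
  - cbn in Ha, Hc. apply in_map_iff in Hc as [b [<- Hb]].
    exists ((a, b) :: l). split; [constructor; auto | reflexivity].
Qed.

Lemma le_div_iff (a r u : R) : 0 < a -> (r <= u / a <-> r * a <= u).
Proof.
  intros Ha. split; intros H.
  - apply (Rmult_le_compat_r a) in H; [|lra].
    replace (u / a * a) with u in H by (field; lra). exact H.
  - replace r with (r * a * / a) by (field; lra).
    apply Rmult_le_compat_r; [left; apply Rinv_0_lt_compat|]; assumption.
Qed.

Section FourierMotzkin.
Context {X : Type} (f : X -> R).

(* Fourier-Motzkin elimination of [f]: keep [g] where [f >= 0] and add, for every pair
   [f x > 0 > f y], the combination of [g x] and [g y] whose [f]-part cancels. *)
Definition fm (g : X -> R) (z : X + X * X) : R :=
  match z with
  | inl x => if Rle_dec 0 (f x) then g x else 0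
  | inr (x, y) =>
      if Rlt_dec 0 (f x) then if Rlt_dec (f y) 0 then - f y * g x + f x * g y else 0 else 0
  end.

Definition fm_pullback (q : R * (X + X * X)) : list (R * X) :=
  match snd q with
  | inl x => if Rle_dec 0 (f x) then (fst q, x) :: nil else nil
  | inr (x, y) =>
      if Rlt_dec 0 (f x) then
        if Rlt_dec (f y) 0 then (fst q * - f y, x) :: (fst q * f x, y) :: nil else nil
      else nil
  end.

Lemma fm_wsum (l : list (R * (X -> R))) z :
  fm (fun x => wsum l (fun g => g x)) z = wsum l (fun g => fm g z).
Proof.
  induction l as [|p l IH]; [|rewrite wsum_cons, <- IH];
  destruct z as [x|[x y]]; cbn -[wsum]; rewrite ?wsum_nil, ?wsum_cons;
  repeat destruct (Rle_dec _ _); repeat destruct (Rlt_dec _ _); ring.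
Qed.

Lemma fm_self_ge0 z : 0 <= fm f z.
Proof.
  destruct z as [x|[x y]]; cbn;
  repeat destruct (Rle_dec _ _); repeat destruct (Rlt_dec _ _); nra.
Qed.

Lemma wsum_fm_pullback (mu : list (R * (X + X * X))) g :
  wsum (flat_map fm_pullback mu) g = wsum mu (fm g).
Proof.
  induction mu as [|[w [x|[x y]]] mu IH]; [reflexivity| |];
  cbn [flat_map]; rewrite wsum_app, IH, wsum_cons; unfold fm_pullback, fm; cbn [fst snd];
  repeat destruct (Rle_dec _ _); repeat destruct (Rlt_dec _ _);
  rewrite ?wsum_cons, ?wsum_nil; cbn [fst snd]; ring.
Qed.

Lemma pos_weights_fm_pullback (mu : list (R * (X + X * X))) :
  pos_weights mu -> pos_weights (flat_map fm_pullback mu).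
Proof.
  intros Hmu; induction Hmu as [|[w [x|[x y]]] mu Hw _ IH]; [constructor| |];
  cbn [flat_map]; apply Forall_app; split; auto; unfold fm_pullback; cbn in Hw |- *;
  repeat destruct (Rle_dec _ _); repeat destruct (Rlt_dec _ _);
  repeat constructor; cbn; nra.
Qed.

(* The shift [t] is the supremum of the lower bounds [G y / - f y] imposed by the points
   where [f < 0]; the pair constraints say that it stays below every upper bound
   [- G x / f x] coming from the points where [f > 0]. *)
Lemma fm_nonpos_shift (G : X -> R) x0 :
  0 < f x0 -> (forall z, fm G z <= 0) -> exists t, 0 <= t /\ forall x, G x + t * f x <= 0.
Proof.
  intros Hx0 HG.
  assert (Hnn : forall x, 0 <= f x -> G x <= 0).
  { intros x Hx. specialize (HG (inl x)). cbn in HG.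
    destruct (Rle_dec 0 (f x)); [exact HG | contradiction]. }
  assert (Hpair : forall x y, 0 < f x -> f y < 0 -> - f y * G x + f x * G y <= 0).
  { intros x y Hx Hy. specialize (HG (inr (x, y))). cbn in HG.
    destruct (Rlt_dec 0 (f x)); [|contradiction].
    destruct (Rlt_dec (f y) 0); [exact HG | contradiction]. }
  set (E := fun r => r = 0 \/ exists y, f y < 0 /\ G y = - r * f y).
  assert (Hub : forall x, 0 < f x -> is_upper_bound E (- G x / f x)).
  { intros x Hx r [-> | [y [Hy HGy]]]; apply le_div_iff; auto.
    - specialize (Hnn x). lra.
    - specialize (Hpair x y Hx Hy). rewrite HGy in Hpair. nra. }
  destruct (completeness E) as [t [Ht Hlub]].
  - exists (- G x0 / f x0). apply Hub, Hx0.
  - exists 0. left. reflexivity.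
  - exists t. split; [apply Ht; left; reflexivity|].
    intros x. destruct (Rtotal_order (f x) 0) as [Hlt | [Heq | Hgt]].
    + set (r := G x / - f x).
      assert (HGx : G x = - r * f x) by (unfold r; field; lra).
      assert (Hr : r <= t) by (apply Ht; right; exists x; auto).
      rewrite HGx. nra.
    + rewrite Heq. specialize (Hnn x). lra.
    + specialize (Hlub _ (Hub x Hgt)). apply le_div_iff in Hlub; lra.
Qed.

Lemma fm_avoids_nonpositivity fs :
  avoids_nonpositivity (f :: fs) -> avoids_nonpositivity (map fm fs).
Proof.
  intros Hav l' Hne Hl'.
  destruct (Forall_in_map_inv _ _ _ _ Hl') as [l [Hl ->]].
  assert (Hne' : l <> nil) by (intros ->; contradiction).
  destruct (avoids_nonpositivity_head Hav) as [x0 Hx0].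
  set (G := fun x => wsum l (fun g => g x)).
  apply NNPP; intros Hno.
  assert (HG : forall z, fm G z <= 0).
  { intros z. apply Rnot_lt_le. intros Hz. apply Hno. exists z.
    rewrite wsum_map_snd. unfold G in Hz. rewrite fm_wsum in Hz. exact Hz. }
  destruct (fm_nonpos_shift G x0 Hx0 HG) as [t [Ht HtG]].
  assert (Hl_fs : Forall (fun p => 0 < fst p /\ In (snd p) (f :: fs)) l).
  { eapply Forall_impl; [|exact Hl]. intros p [Hp Hin]. split; [auto | right; auto]. }
  destruct (Rle_lt_or_eq_dec 0 t Ht) as [Htpos | <-].
  - destruct (Hav ((t, f) :: l)) as [x Hx]; [discriminate | |].
    + constructor; [split; [auto | left; reflexivity] | exact Hl_fs].
    + rewrite wsum_cons in Hx. cbn in Hx. specialize (HtG x). unfold G in HtG. lra.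
  - destruct (Hav l Hne' Hl_fs) as [x Hx]. specialize (HtG x). unfold G in HtG. lra.
Qed.

End FourierMotzkin.

Lemma exists_dominating_scale (ps : list (R * R)) :
  Forall (fun p => 0 < fst p) ps -> exists K, 0 < K /\ Forall (fun p => 0 < K * fst p + snd p) ps.
Proof.
  intros Hps; induction Hps as [|[a b] ps Ha Hps [K [HK HKps]]].
  - exists 1. split; [lra | constructor].
  - cbn in Ha. assert (Hc : 0 <= Rabs b / a) by (apply le_div_iff; [auto | rewrite Rmult_0_l; apply Rabs_pos]).
    exists (K + Rabs b / a). split; [lra|]. constructor.
    + cbn. replace ((K + Rabs b / a) * a) with (K * a + Rabs b) by (field; lra).
      pose proof (Rle_abs (- b)) as Hb. rewrite Rabs_Ropp in Hb. nra.
    + rewrite Forall_forall in Hps, HKps |- *. intros [a' b'] Hin.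
      specialize (Hps _ Hin). specialize (HKps _ Hin). cbn in *. nra.
Qed.

(* Gordan's alternative, proved by eliminating the gambles one at a time (Fourier-Motzkin). *)
Theorem gordan_alternative {X : Type} (fs : list (X -> R)) :
  avoids_nonpositivity fs -> exists mu : list (R * X), pos_weights mu /\ forall g, In g fs -> 0 < wsum mu g.
Proof.
  remember (length fs) as n eqn:Hn. revert X fs Hn.
  induction n as [|n IH]; intros X [|f fs] Hn Hav; try discriminate.
  - exists nil. split; [constructor | intros g []].
  - injection Hn as Hn.
    destruct (avoids_nonpositivity_head Hav) as [x0 Hx0].
    destruct (IH _ (map (fm f) fs)) as [mu' [Hmu' Hpos']].
    { rewrite length_map. auto. }
    { apply fm_avoids_nonpositivity, Hav. }
    set (mu := flat_map (fm_pullback f) mu').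
    assert (Hmu : pos_weights mu) by (apply pos_weights_fm_pullback, Hmu').
    assert (Hf : 0 <= wsum mu f).
    { unfold mu. rewrite wsum_fm_pullback. apply wsum_ge0; [exact Hmu' | apply fm_self_ge0]. }
    assert (Hfs : forall g, In g fs -> 0 < wsum mu g).
    { intros g Hg. unfold mu. rewrite wsum_fm_pullback. apply Hpos', in_map, Hg. }
    destruct (exists_dominating_scale (map (fun g => (wsum mu g, g x0)) fs)) as [K [HK HKfs]].
    { apply Forall_map, Forall_forall. exact Hfs. }
    exists (map (fun q => (K * fst q, snd q)) mu ++ (1, x0) :: nil). split.
    + apply Forall_app. split.
      * apply Forall_map. eapply Forall_impl; [|exact Hmu]. intros q Hq. cbn. nra.
      * repeat constructor. cbn. lra.
    + intros g Hg. rewrite wsum_app, wsum_scale_weights, wsum_cons, wsum_nil. cbn [fst snd].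
      destruct Hg as [<- | Hg]; [nra|].
      rewrite Forall_map, Forall_forall in HKfs. specialize (HKfs g Hg). cbn in HKfs. lra.
Qed.

Lemma ind_true {X} (B : X -> Prop) x : B x -> ind B x = 1.
Proof. intros H. unfold ind. destruct (excluded_middle_informative (B x)); tauto. Qed.

Lemma ind_ge0 {X} (B : X -> Prop) x : 0 <= ind B x.
Proof. unfold ind. destruct (excluded_middle_informative (B x)); lra. Qed.

Lemma bounded_ind {X} (B : X -> Prop) : bounded (ind B).
Proof.
  exists 1. intros x. unfold ind.
  destruct (excluded_middle_informative (B x)); rewrite ?Rabs_R0, ?Rabs_R1; lra.
Qed.

Lemma bounded_comp {X Y} (f : Y -> R) (p : X -> Y) : bounded f -> bounded (fun x => f (p x)).
Proof. intros [M HM]. exists M. intros x. apply HM. Qed.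

Lemma bounded_mul {X} (f g : X -> R) : bounded f -> bounded g -> bounded (fun x => f x * g x).
Proof.
  intros [M HM] [N HN]. exists (Rabs M * Rabs N). intros x. rewrite Rabs_mult.
  specialize (HM x). specialize (HN x). pose proof (Rle_abs M). pose proof (Rle_abs N).
  apply Rmult_le_compat; auto using Rabs_pos; lra.
Qed.

Lemma gset_ext {X} (D : gset X) f g : D f -> (forall x, f x = g x) -> D g.
Proof. intros Hf E. replace g with f; [exact Hf | apply functional_extensionality, E]. Qed.

Lemma nonempty_event {X} (Bs : (X -> Prop) -> Prop) :
  inhabited X -> (forall B, Bs B -> exists x, B x) ->
  forall B, Bs B \/ B = (fun _ => True) -> exists x, B x.
Proof. intros [x] HBs B [HB | ->]; [auto | exists x; exact I]. Qed.

Section Coherence.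
Context {X : Type} {D : gset X} (hD : coherent D).

Lemma coherent_bounded f : D f -> bounded f.
Proof. apply hD. Qed.

Lemma coherent_pos f : bounded f -> (forall x, 0 <= f x) -> (exists x, f x <> 0) -> D f.
Proof. apply hD. Qed.

Lemma coherent_scale f c : D f -> 0 < c -> D (fun x => c * f x).
Proof. apply hD. Qed.

Lemma coherent_add f g : D f -> D g -> D (fun x => f x + g x).
Proof. apply hD. Qed.

Lemma coherent_unscale f c : 0 < c -> D (fun x => c * f x) -> D f.
Proof.
  intros Hc Hf. apply (gset_ext D (fun x => / c * (c * f x))).
  - apply coherent_scale; [exact Hf | apply Rinv_0_lt_compat, Hc].
  - intros x. field. lra.
Qed.

Lemma coherent_positive_somewhere f : D f -> exists x, 0 < f x.
Proof.
  intros Hf. apply NNPP. intros Hno. destruct hD as [_ [_ [_ [_ Hnonpos]]]].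
  apply (Hnonpos f (coherent_bounded f Hf)); [|exact Hf].
  intros x. apply Rnot_lt_le. intros Hx. apply Hno. exists x. exact Hx.
Qed.

Lemma coherent_ind B : (exists x, B x) -> D (ind B).
Proof.
  intros [x Hx]. apply coherent_pos; [apply bounded_ind | apply ind_ge0 |].
  exists x. rewrite ind_true by exact Hx. lra.
Qed.

Lemma coherent_wsum (l : list (R * (X -> R))) :
  l <> nil -> Forall (fun p => 0 < fst p /\ D (snd p)) l -> D (fun x => wsum l (fun g => g x)).
Proof.
  intros Hne Hl. induction Hl as [|p l [Hp Hf] Hl IH]; [contradiction|].
  destruct l as [|p' l].
  - apply (gset_ext D (fun x => fst p * snd p x)); [apply coherent_scale; auto|].
    intros x. rewrite wsum_cons, wsum_nil. ring.
  - apply coherent_add; [apply coherent_scale; auto | apply IH; discriminate].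
Qed.

Lemma coherent_avoids_nonpositivity fs : Forall D fs -> avoids_nonpositivity fs.
Proof.
  intros Hfs l Hne Hl. apply coherent_positive_somewhere, coherent_wsum; [exact Hne|].
  eapply Forall_impl; [|exact Hl]. intros p [Hp Hin]. split; [exact Hp|].
  rewrite Forall_forall in Hfs. auto.
Qed.

End Coherence.

Lemma posi_wsum {X} (A : gset X) h :
  posi A h <-> exists l, l <> nil /\ Forall (fun p => 0 < fst p /\ A (snd p)) l /\
                         forall x, h x = wsum l (fun g => g x).
Proof.
  split.
  - intros [l [Hne [Hl ->]]]. exists l. repeat split; auto.
  - intros [l [Hne [Hl Hh]]]. exists l. repeat split; auto.
    apply functional_extensionality. exact Hh.
Qed.

Lemma posi_of {X} (A : gset X) a : A a -> posi A a.
Proof.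
  intros Ha. apply posi_wsum. exists ((1, a) :: nil). split; [discriminate|]. split.
  - constructor; [cbn; split; [lra | exact Ha] | constructor].
  - intros x. rewrite wsum_cons, wsum_nil. cbn. ring.
Qed.

Lemma posi_scale {X} (A : gset X) h c : posi A h -> 0 < c -> posi A (fun x => c * h x).
Proof.
  intros Hh Hc. apply posi_wsum in Hh as [l [Hne [Hl Hh]]]. apply posi_wsum.
  exists (map (fun q => (c * fst q, snd q)) l). split; [|split].
  - destruct l; [contradiction | discriminate].
  - apply Forall_map. eapply Forall_impl; [|exact Hl]. intros p [Hp Ha]. cbn. split; [nra | exact Ha].
  - intros x. rewrite wsum_scale_weights, Hh. reflexivity.
Qed.

Lemma posi_add {X} (A : gset X) h k : posi A h -> posi A k -> posi A (fun x => h x + k x).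
Proof.
  intros Hh Hk. apply posi_wsum in Hh as [l [Hne [Hl Hh]]].
  apply posi_wsum in Hk as [m [_ [Hm Hk]]]. apply posi_wsum.
  exists (l ++ m). split; [|split].
  - destruct l; [contradiction | discriminate].
  - apply Forall_app. auto.
  - intros x. rewrite wsum_app, Hh, Hk. reflexivity.
Qed.

Lemma posi_bounded {X} (A : gset X) h : (forall a, A a -> bounded a) -> posi A h -> bounded h.
Proof.
  intros HA Hh. apply posi_wsum in Hh as [l [_ [Hl Hh]]].
  destruct (bounded_wsum l (fun g => g)) as [M HM].
  - eapply Forall_impl; [|exact Hl]. intros p [_ Ha]. apply HA, Ha.
  - exists M. intros x. rewrite Hh. apply HM.
Qed.

Lemma posi_comp {X Y} (A : gset X) (A' : gset Y) (s : Y -> X) h :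
  (forall a, A a -> A' (fun y => a (s y))) -> posi A h -> posi A' (fun y => h (s y)).
Proof.
  intros HA Hh. apply posi_wsum in Hh as [l [Hne [Hl Hh]]]. apply posi_wsum.
  exists (map (fun p => (fst p, fun y => snd p (s y))) l). split; [|split].
  - destruct l; [contradiction | discriminate].
  - apply Forall_map. eapply Forall_impl; [|exact Hl]. intros p [Hp Ha]. cbn. split; [exact Hp | apply HA, Ha].
  - intros y. rewrite (wsum_map_snd (fun g y => g (s y))), Hh. reflexivity.
Qed.

Lemma coherent_natext {X} (A : gset X) :
  (forall a, A a -> bounded a) -> (forall h, natext A h -> ~ (forall x, h x <= 0)) ->
  coherent (natext A).
Proof.
  intros HA Hnonpos. split; [|split; [|split; [|split]]].
  - intros f. apply posi_bounded. intros a [Ha | [Hb _]]; auto.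
  - intros f Hb Hnn Hnz. apply posi_of. right. repeat split; auto.
  - intros f c Hf Hc. apply posi_scale; auto.
  - intros f g Hf Hg. apply posi_add; auto.
  - intros f _ Hle Hf. exact (Hnonpos f Hf Hle).
Qed.

Definition integrate2 {X1 X2 : Type} (mu : list (R * X2)) (h : X1 * X2 -> R) (x1 : X1) : R :=
  wsum mu (fun x2 => h (x1, x2)).

Definition integrates_into {X1 X2 : Type} (D1 : gset X1) (ws : list (X2 -> R))
  (a : X1 * X2 -> R) : Prop :=
  forall mu, pos_weights mu -> (forall w, In w ws -> 0 < wsum mu w) -> D1 (integrate2 mu a).

Lemma integrates_into_mono {X1 X2} (D1 : gset X1) (ws ws' : list (X2 -> R)) a :
  incl ws ws' -> integrates_into D1 ws a -> integrates_into D1 ws' a.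
Proof. intros Hincl Ha mu Hmu Hws. apply Ha; auto. Qed.

Section IndependentNaturalExtension.
Context {X1 X2 : Type} (ne1 : inhabited X1) (ne2 : inhabited X2)
  {Bs1 : (X1 -> Prop) -> Prop} {Bs2 : (X2 -> Prop) -> Prop}
  (hB1 : forall B, Bs1 B -> exists x, B x) (hB2 : forall B, Bs2 B -> exists x, B x)
  {D1 : gset X1} {D2 : gset X2} (hD1 : coherent D1) (hD2 : coherent D2).

Local Notation D := (indep_natext Bs1 Bs2 D1 D2).

Lemma generator_bounded a : gunion (A12 Bs1 D2) (A21 Bs2 D1) a -> bounded a.
Proof.
  intros [[f2 [B1 [Hf [_ ->]]]] | [f1 [B2 [Hf [_ ->]]]]]; apply bounded_mul.
  - apply (bounded_comp f2 snd), (coherent_bounded hD2), Hf.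
  - apply (bounded_comp (ind B1) fst), bounded_ind.
  - apply (bounded_comp f1 fst), (coherent_bounded hD1), Hf.
  - apply (bounded_comp (ind B2) snd), bounded_ind.
Qed.

Lemma A12_integrates a : A12 Bs1 D2 a -> exists w, D2 w /\ integrates_into D1 (w :: nil) a.
Proof.
  intros [f2 [B1 [Hf2 [HB1 ->]]]]. exists f2. split; [exact Hf2|].
  intros mu _ Hpos. specialize (Hpos f2 (or_introl eq_refl)).
  apply (gset_ext D1 (fun x1 => wsum mu f2 * ind B1 x1)).
  - apply (coherent_scale hD1); [|exact Hpos].
    apply (coherent_ind hD1), (nonempty_event Bs1 ne1 hB1), HB1.
  - intros x1. unfold integrate2. cbn -[wsum]. rewrite wsum_scaler. reflexivity.
Qed.

Lemma A21_integrates a : A21 Bs2 D1 a -> exists w, D2 w /\ integrates_into D1 (w :: nil) a.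
Proof.
  intros [f1 [B2 [Hf1 [HB2 ->]]]]. exists (ind B2). split.
  - apply (coherent_ind hD2), (nonempty_event Bs2 ne2 hB2), HB2.
  - intros mu _ Hpos. specialize (Hpos _ (or_introl eq_refl)).
    apply (gset_ext D1 (fun x1 => wsum mu (ind B2) * f1 x1)); [apply (coherent_scale hD1); auto|].
    intros x1. unfold integrate2. cbn -[wsum]. rewrite wsum_scalel. ring.
Qed.

Lemma Gpos_integrates a : Gpos a -> exists w, D2 w /\ integrates_into D1 (w :: nil) a.
Proof.
  intros [Hb [Hnn [[x1 x2] Hx]]]. exists (fun y => a (x1, y)). split.
  - apply (coherent_pos hD2); [apply (bounded_comp a), Hb | intros y; apply Hnn | exists x2; exact Hx].
  - intros mu Hmu Hpos. specialize (Hpos _ (or_introl eq_refl)). apply (coherent_pos hD1).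
    + apply (bounded_wsum mu (fun y x => a (x, y))), Forall_forall.
      intros q _. apply (bounded_comp a), Hb.
    + intros x. apply wsum_ge0; [exact Hmu | intros y; apply Hnn].
    + exists x1. unfold integrate2. lra.
Qed.

Lemma generators_integrate (l : list (R * (X1 * X2 -> R))) :
  Forall (fun p => 0 < fst p /\ gunion (gunion (A12 Bs1 D2) (A21 Bs2 D1)) Gpos (snd p)) l ->
  exists ws, Forall D2 ws /\ Forall (fun p => integrates_into D1 ws (snd p)) l.
Proof.
  intros Hl. induction Hl as [|p l [_ Hp] _ [ws [Hws Hl]]].
  - exists nil. split; constructor.
  - assert (Hw : exists w, D2 w /\ integrates_into D1 (w :: nil) (snd p)).
    { destruct Hp as [[Hp | Hp] | Hp];
        [apply A12_integrates | apply A21_integrates | apply Gpos_integrates]; exact Hp. }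
    destruct Hw as [w [Hw Hpw]].
    exists (w :: ws). split; [constructor; assumption|]. constructor.
    + apply (integrates_into_mono D1 (w :: nil)); [|exact Hpw].
      intros v [<- | []]. left. reflexivity.
    + eapply Forall_impl; [|exact Hl]. intros q.
      apply integrates_into_mono. intros v Hv. right. exact Hv.
Qed.

Lemma indep_natext_integrate h w0 : D h -> D2 w0 ->
  exists mu, pos_weights mu /\ 0 < wsum mu w0 /\ D1 (integrate2 mu h).
Proof.
  intros Hh Hw0. apply posi_wsum in Hh as [l [Hne [Hl Hh]]].
  destruct (generators_integrate l Hl) as [ws [Hws Hint]].
  destruct (gordan_alternative (w0 :: ws)) as [mu [Hmu Hpos]].
  { apply (coherent_avoids_nonpositivity hD2). constructor; assumption. }
  exists mu. split; [exact Hmu|]. split; [apply Hpos; left; reflexivity|].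
  apply (gset_ext D1 (fun x1 => wsum (map (fun p => (fst p, integrate2 mu (snd p))) l) (fun g => g x1))).
  - apply (coherent_wsum hD1); [destruct l; [contradiction | discriminate]|].
    apply Forall_map, Forall_forall. intros p Hp. rewrite Forall_forall in Hl, Hint. cbn.
    split; [apply Hl, Hp|]. apply (Hint p Hp mu Hmu). intros w Hw. apply Hpos. right. exact Hw.
  - intros x1. rewrite wsum_map_snd. unfold integrate2.
    rewrite (wsum_ext mu (fun x2 => h (x1, x2)) (fun x2 => wsum l (fun g => g (x1, x2))))
      by (intros; apply Hh).
    exact (wsum_swap l mu (fun a x2 => a (x1, x2))).
Qed.

Lemma indep_natext_not_nonpos h : D h -> ~ (forall z, h z <= 0).
Proof.
  intros Hh Hle.
  destruct (indep_natext_integrate h (ind (fun _ => True)) Hh) as [mu [Hmu [_ HD1]]].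
  { apply (coherent_ind hD2). destruct ne2 as [x2]. exists x2. exact I. }
  destruct (coherent_positive_somewhere hD1 _ HD1) as [x1 Hx1].
  assert (integrate2 mu h x1 <= 0) by (apply wsum_le0; [exact Hmu | intros x2; apply Hle]).
  lra.
Qed.

Lemma indep_natext_coherent : coherent D.
Proof. apply coherent_natext; [exact generator_bounded | exact indep_natext_not_nonpos]. Qed.

Lemma marg1_cond_indep_natext B2 : Bs2 B2 \/ B2 = (fun _ => True) ->
  forall f, marg1_cond D B2 f <-> D1 f.
Proof.
  intros HB2 f. split.
  - intros [_ Hh].
    destruct (indep_natext_integrate _ (ind B2) Hh) as [mu [_ [Hpos HD1]]].
    { apply (coherent_ind hD2), (nonempty_event Bs2 ne2 hB2), HB2. }
    apply (coherent_unscale hD1 f (wsum mu (ind B2)) Hpos), (gset_ext D1 _ _ HD1).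
    intros x1. unfold integrate2. cbn -[wsum]. rewrite wsum_scalel. ring.
  - intros Hf. split; [apply (coherent_bounded hD1), Hf|].
    apply posi_of. left. right. exists f, B2. repeat split; auto.
Qed.

Lemma marg1_indep_natext f : marg1 D f <-> D1 f.
Proof.
  rewrite <- (marg1_cond_indep_natext (fun _ => True) (or_intror eq_refl) f).
  unfold marg1, marg1_cond.
  replace (fun z : X1 * X2 => f (fst z) * ind (fun _ => True) (snd z))
    with (fun z : X1 * X2 => f (fst z)); [reflexivity|].
  apply functional_extensionality. intros z. rewrite ind_true by exact I. ring.
Qed.

End IndependentNaturalExtension.

Lemma Gpos_swap {X Y} (a : X * Y -> R) : Gpos a -> Gpos (fun z : Y * X => a (snd z, fst z)).
Proof.
  intros [Hb [Hnn [[x y] Hxy]]]. split; [apply (bounded_comp a), Hb|].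
  split; [intros z; apply Hnn | exists (y, x); exact Hxy].
Qed.

Lemma indep_natext_swap {X1 X2} Bs1 Bs2 (D1 : gset X1) (D2 : gset X2) h :
  indep_natext Bs1 Bs2 D1 D2 h -> indep_natext Bs2 Bs1 D2 D1 (fun z => h (snd z, fst z)).
Proof.
  apply posi_comp. intros a [[[f2 [B1 [Hf [HB ->]]]] | [f1 [B2 [Hf [HB ->]]]]] | Ha].
  - left. right. exists f2, B1. repeat split; auto.
  - left. left. exists f1, B2. repeat split; auto.
  - right. apply Gpos_swap, Ha.
Qed.

Lemma indep_natext_swap_iff {X1 X2} Bs1 Bs2 (D1 : gset X1) (D2 : gset X2) h :
  indep_natext Bs2 Bs1 D2 D1 (fun z => h (snd z, fst z)) <-> indep_natext Bs1 Bs2 D1 D2 h.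
Proof.
  split; [|apply indep_natext_swap].
  intros Hh. apply (gset_ext _ _ _ (indep_natext_swap _ _ _ _ _ Hh)). intros [x1 x2]. reflexivity.
Qed.

Lemma marg2_indep_natext_swap {X1 X2} Bs1 Bs2 (D1 : gset X1) (D2 : gset X2) f :
  marg2 (indep_natext Bs1 Bs2 D1 D2) f <-> marg1 (indep_natext Bs2 Bs1 D2 D1) f.
Proof.
  unfold marg1, marg2. rewrite <- (indep_natext_swap_iff Bs1 Bs2 D1 D2 (fun z => f (snd z))).
  reflexivity.
Qed.

Lemma marg2_cond_indep_natext_swap {X1 X2} Bs1 Bs2 (D1 : gset X1) (D2 : gset X2) B f :
  marg2_cond (indep_natext Bs1 Bs2 D1 D2) B f <-> marg1_cond (indep_natext Bs2 Bs1 D2 D1) B f.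
Proof.
  unfold marg1_cond, marg2_cond.
  rewrite <- (indep_natext_swap_iff Bs1 Bs2 D1 D2 (fun z => f (snd z) * ind B (fst z))).
  reflexivity.
Qed.

Theorem proposition41 (X1 X2 : Type) (ne1 : inhabited X1) (ne2 : inhabited X2)
  (Bs1 : (X1 -> Prop) -> Prop) (Bs2 : (X2 -> Prop) -> Prop)
  (hB1 : forall B, Bs1 B -> exists x, B x)
  (hB2 : forall B, Bs2 B -> exists x, B x)
  (D1 : gset X1) (D2 : gset X2)
  (hD1 : coherent D1) (hD2 : coherent D2) :
  indep_product Bs1 Bs2 D1 D2 (indep_natext Bs1 Bs2 D1 D2).
Proof.
  pose proof (marg1_indep_natext ne1 ne2 hB1 hB2 hD1 hD2) as marg1_D.
  pose proof (marg1_indep_natext ne2 ne1 hB2 hB1 hD2 hD1) as marg1_swapped.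
  pose proof (marg1_cond_indep_natext ne1 ne2 hB1 hB2 hD1 hD2) as cond1_D.
  pose proof (marg1_cond_indep_natext ne2 ne1 hB2 hB1 hD2 hD1) as cond1_swapped.
  split; [split; [exact (indep_natext_coherent ne1 ne2 hB1 hB2 hD1 hD2) | split] | split].
  - intros B2 HB2 f. rewrite cond1_D, marg1_D by (left; exact HB2). reflexivity.
  - intros B1 HB1 f.
    rewrite marg2_cond_indep_natext_swap, marg2_indep_natext_swap, cond1_swapped, marg1_swapped
      by (left; exact HB1).
    reflexivity.
  - exact marg1_D.
  - intros f. rewrite marg2_indep_natext_swap. apply marg1_swapped.
Qed.
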